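(* Let $n>1$ be an odd integer with prime decomposition $n=p_1^{n_1}\cdots p_m^{n_m}$, let $A$ be a finite abelian group, and let $G$ be a group containing $A$ as a normal subgroup with $G/A\cong\mathbb{Z}_n$. If $[e]_\varphi$ is a subgroup of $G$ for every $\varphi\in{\rm Aut}\,G$, then $G$ is nilpotent of nilpotency class at most $\max\{n_1,\dots,n_m\}+1$.
   Context: For an automorphism $\varphi$ of $G$, $[e]_\varphi=\{z^{-1}\varphi(z)\mid z\in G\}$. A group has nilpotency class at most $c$ if $\gamma_{c+1}(G)=\{e\}$, where $\gamma_1(G)=G$, $\gamma_{k+1}(G)=[\gamma_k(G),G]$. *)

From HB Require Import structures.
From mathcomp Require Import all_boot all_order all_algebra all_fingroup all_solvable.
Set Implicit Arguments. Unset Strict Implicit. Unset Printing Implicit Defensive.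
Local Open Scope group_scope.

Definition e_class (gT : finGroupType) (G : {set gT}) (phi : {perm gT}) : {set gT} :=
  [set z^-1 * phi z | z in G].

From HB Require Import structures.
From mathcomp Require Import all_boot all_order all_algebra all_fingroup all_solvable.

Set Implicit Arguments.
Unset Strict Implicit.
Unset Printing Implicit Defensive.

Local Open Scope group_scope.

(* Write G = A<[g]> and tau x = [~ x, g], an endomorphism of the abelian group
   A commuting with conjugation by g. The lower central series satisfies
   'L_(k+2)(G) <= tau^(k+1)(A), so it is enough that tau^(m+1) kills A, and by
   splitting into primary components, that it kills each p-element w of A.
   Applied to the inner automorphism induced by w, the hypothesis makes
   S w = [set [~ z, w] | z in G] a p-group, normalized by G, of order dividing
   #|G : A|. Since tau is not injective on S w when S w <> 1, and
   S (tau w) <= tau @: S w, each application of tau divides #|S w| by at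
   least p until S w = 1, where tau w = 1. *)

Lemma pnat_leq_pexp p a j : prime p -> p.-nat a -> a < p ^ j.+1 -> a <= p ^ j.
Proof.
move=> p_pr /p_natP[k ->]; have p_gt1 := prime_gt1 p_pr.
by rewrite ltn_exp2l // ltnS leq_exp2l.
Qed.

Lemma p_elt_sub_ker (aT rT : finGroupType) (D : {group aT})
    (f : {morphism D >-> rT}) :
  (forall p x, prime p -> x \in D -> p.-elt x -> f x = 1) -> D \subset 'ker f.
Proof.
move=> f_p_elt; apply/subsetP=> x Dx.
rewrite -(prod_constt x) group_prod // => p _.
have Dx_p : x.`_p \in D by rewrite (subsetP _ _ (cycle_constt p x)) ?cycle_subG.
have [p_pr | p_npr] := boolP (prime p).
  by apply/(kerP f Dx_p); apply: (f_p_elt p) => //; apply: p_elt_constt.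
suff -> : x.`_p = 1 by apply: group1.
apply/constt1P/pnatP=> [|q q_pr _]; first exact: order_gt0.
by rewrite !inE; apply: contraNneq p_npr => <-.
Qed.

Lemma e_class_conj_aut (gT : finGroupType) (G : {group gT}) w :
  w \in G -> e_class G (conj_aut G w) = [set [~ z, w] | z in G].
Proof.
move=> Gw; apply: eq_in_imset => z Gz.
by rewrite norm_conj_autE ?commgEl ?(subsetP (normG G)).
Qed.

Lemma cyclic_quotient_mulg_cycle (gT : finGroupType) (G A : {group gT}) :
  A <| G -> cyclic (G / A) -> exists2 g, g \in G & A * <[g]> = G.
Proof.
move=> nsAG /cyclicP[X defGA].
have /morphimP[g Ng Gg defX] : X \in G / A by rewrite defGA cycle_id.
exists g => //; rewrite -(quotientGK nsAG) defGA defX -quotient_cycle //.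
by rewrite quotientK ?cycle_subG.
Qed.

Section CommutatorWithGenerator.

Variables (gT : finGroupType) (G A : {group gT}) (g : gT).
Hypotheses (cAA : abelian A) (nAg : g \in 'N(A)) (defG : A * <[g]> = G).

Let tau x := [~ x, g].

Lemma commg_gen_in x : x \in A -> tau x \in A.
Proof. by move=> Ax; rewrite /tau commgEl groupM ?groupV ?memJ_norm. Qed.

Lemma commg_genM : {in A &, {morph tau : x y / x * y}}.
Proof.
move=> x y Ax Ay; rewrite /tau commMgJ; congr (_ * _).
by apply/conjg_fixP/commgP; apply: (centsP cAA); rewrite ?commg_gen_in.
Qed.

Lemma iter_commg_gen_in k x : x \in A -> iter k tau x \in A.
Proof. by elim: k => //= k IHk Ax; rewrite commg_gen_in ?IHk. Qed.

Lemma iter_commg_genM k : {in A &, {morph iter k tau : x y / x * y}}.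
Proof.
elim: k => //= k IHk x y Ax Ay.
by rewrite IHk ?commg_genM ?iter_commg_gen_in.
Qed.

Lemma iter_commg_genJ k i x : iter k tau (x ^ g ^+ i) = iter k tau x ^ g ^+ i.
Proof.
elim: k => //= k ->; rewrite /tau conjRg; congr [~ _, _].
by apply/esym/conjg_fixP/commgP/commuteX.
Qed.

Let tau_ k : {morphism A >-> gT} := Morphism (@iter_commg_genM k).
Let T k := (tau_ k @* A)%G.

Lemma mem_iter_commg_gen k y :
  reflect (exists2 x, x \in A & y = iter k tau x) (y \in T k).
Proof. by rewrite /= morphimEdom; apply: (iffP imsetP). Qed.

Lemma iter_commg_gen_sub k : T k \subset A.
Proof.
by apply/subsetP=> _ /mem_iter_commg_gen[x Ax ->]; apply: iter_commg_gen_in.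
Qed.

Lemma conj_iter_commg_gen k i x : x \in T k -> x ^ g ^+ i \in T k.
Proof.
case/mem_iter_commg_gen=> a Aa ->; apply/mem_iter_commg_gen.
by exists (a ^ g ^+ i); rewrite ?iter_commg_genJ // memJ_norm ?groupX.
Qed.

Lemma commg_expg_iter_commg_gen k i x : x \in T k -> [~ x, g ^+ i] \in T k.+1.
Proof.
move=> Tx; elim: i => [|i IHi]; first by rewrite commg1 group1.
rewrite expgS commgMJ groupM ?conj_iter_commg_gen //.
by case/mem_iter_commg_gen: Tx => a Aa ->; apply/mem_iter_commg_gen; exists a.
Qed.

Let sAG : A \subset G. Proof. by rewrite -defG mulG_subl. Qed.

Let Gg : g \in G.
Proof. by rewrite -defG (subsetP (mulG_subr _ _)) ?cycle_id. Qed.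

Let nsAG : A <| G.
Proof. by rewrite /normal sAG -defG mul_subG ?normG ?cycle_subG. Qed.

Lemma commg_iter_commg_gen k x z : x \in T k -> z \in G -> [~ x, z] \in T k.+1.
Proof.
move=> Tx; rewrite -defG => /mulsgP[a y Aa /cycleP[i ->] ->].
have /commgP/eqP cxa : commute x a.
  by apply: (centsP cAA) => //; apply: (subsetP (iter_commg_gen_sub k)).
by rewrite commgMJ cxa conj1g mulg1 commg_expg_iter_commg_gen.
Qed.

Lemma commg_sub_iter_commg_gen k (H : {set gT}) :
  H \subset T k -> [~: H, G] \subset T k.+1.
Proof.
move=> sHT; rewrite gen_subG; apply/subsetP=> _ /imset2P[x z Hx Gz ->].
by rewrite commg_iter_commg_gen ?(subsetP sHT).
Qed.

Lemma der1_sub_commg_gen : G^`(1) \subset T 1.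
Proof.
have TA0 a : a \in A -> a \in T 0.
  by move=> Aa; apply/mem_iter_commg_gen; exists a.
rewrite gen_subG; apply/subsetP=> _ /imset2P[z1 z2 + Gz2 ->].
rewrite -defG => /mulsgP[a y1 Aa /cycleP[i ->] ->].
rewrite commMgJ groupM //.
  by rewrite conj_iter_commg_gen // commg_iter_commg_gen ?TA0.
move: Gz2; rewrite -defG => /mulsgP[b y2 Ab /cycleP[j ->] ->].
rewrite commgMJ; have /commgP/eqP-> := commuteX2 i j (commute_refl g).
rewrite mul1g -invg_comm conj_iter_commg_gen ?groupV //.
by rewrite commg_expg_iter_commg_gen ?TA0.
Qed.

Lemma lcn_sub_iter_commg_gen k : 'L_k.+2(G) \subset T k.+1.
Proof.
elim: k => [|k IHk]; first exact: der1_sub_commg_gen.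
by rewrite lcnSn commg_sub_iter_commg_gen.
Qed.

Lemma commg_genV x : x \in A -> tau x^-1 = (tau x)^-1.
Proof.
move=> Ax; apply/eqP; rewrite eq_sym eq_invg_mul -commg_genM ?groupV //.
by rewrite mulgV /tau comm1g.
Qed.

Lemma commg_expg_commg_gen i w :
  w \in A -> [~ g ^+ i, tau w] = tau [~ g ^+ i, w].
Proof.
move=> Aw; rewrite !commgEr commg_genM ?memJ_norm ?groupV ?groupX //.
by rewrite -commg_genV //; congr (_ * _); apply: esym (iter_commg_genJ 1 i _).
Qed.

Let S w := [set [~ z, w] | z in G].

Lemma card_commg_class w : #|S w| = #|G : 'C_G[w]|.
Proof.
have -> : S w = [set x^-1 * w | x in w ^: G].
  rewrite /class -imset_comp; apply: eq_imset => z /=.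
  by rewrite commgEr conjVg.
by rewrite index_cent1 card_in_imset // => x1 x2 _ _ /mulIg/invg_inj.
Qed.

Lemma card_commg_class_dvd w : w \in A -> #|S w| %| #|G : A|.
Proof.
move=> Aw; rewrite card_commg_class indexgS //.
by rewrite subsetI sAG sub_cent1 (subsetP cAA).
Qed.

Lemma commg_gen_eq1 w : #|S w| <= 1 -> tau w = 1.
Proof.
move/card_le1_eqP=> S_le1.
rewrite /tau -invg_comm (S_le1 _ _ (imset_f _ (group1 G)) (imset_f _ Gg)).
by rewrite comm1g invg1.
Qed.

Lemma commg_class_commg_gen_sub w : w \in A -> S (tau w) \subset tau @: S w.
Proof.
move=> Aw; apply/subsetP=> _ /imsetP[z + ->].
rewrite -defG => /mulsgP[a y Aa /cycleP[i ->] ->].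
have /commgP/eqP cAtau : commute a (tau w).
  by apply: (centsP cAA); rewrite ?commg_gen_in.
rewrite commMgJ cAtau conj1g mul1g commg_expg_commg_gen //.
by apply: imset_f; apply: imset_f; apply: groupX.
Qed.

Lemma card_commg_class_commg_gen_le w : w \in A -> #|S (tau w)| <= #|S w|.
Proof.
move=> Aw; apply: leq_trans (leq_imset_card tau (S w)).
exact: subset_leq_card (commg_class_commg_gen_sub Aw).
Qed.

Hypothesis groupS : {in A, forall w, group_set (S w)}.

Lemma norm_commg_class w : w \in A -> G \subset 'N(S w).
Proof.
move=> Aw; pose SG := Group (groupS Aw).
apply/normsP=> v Gv; apply/eqP; rewrite eqEcard cardJg leqnn andbT.
apply/subsetP=> _ /imsetP[_ /imsetP[z Gz ->] ->].
have -> : [~ z, w] ^ v = [~ z * v, w] * [~ v, w]^-1.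
  by rewrite commMgJ mulgK.
by rewrite (@groupM _ SG) ?(@groupV _ SG) //; apply: imset_f; rewrite ?groupM.
Qed.

Lemma expg_card_commg_class_cent w : w \in A -> g ^+ #|S w| \in 'C[w].
Proof.
move=> Aw; set C := 'C_G[w].
have sAC : A \subset C by rewrite subsetI sAG sub_cent1 (subsetP cAA).
have sG'A : G^`(1) \subset A.
  exact: subset_trans der1_sub_commg_gen (iter_commg_gen_sub 1).
have nCG : G \subset 'N(C).
  exact: normal_norm (sub_der1_normal (subset_trans sG'A sAC) (subsetIl _ _)).
have := expg_cardG (mem_quotient C Gg).
rewrite card_quotient // -morphX ?(subsetP nCG) // -card_commg_class.
by move/coset_idr; rewrite groupX ?(subsetP nCG) // => /(_ isT)/setIP[].
Qed.

Section PrimeComponent.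

Variable p : nat.
Hypothesis p_pr : prime p.

Let P := 'O_p(A).

Let nPG : G \subset 'N(P).
Proof. exact: normal_norm (char_normal_trans (pcore_char p A) nsAG). Qed.

Let sPA : P \subset A. Proof. exact: pcore_sub. Qed.

Lemma commg_gen_pcore w : w \in P -> tau w \in P.
Proof.
by move=> Pw; rewrite /tau commgEl groupM ?groupV ?memJ_norm ?(subsetP nPG).
Qed.

Lemma commg_class_sub_pcore w : w \in P -> S w \subset P.
Proof.
move=> Pw; apply/subsetP=> _ /imsetP[z Gz ->].
by rewrite commgEr groupM ?memJ_norm ?groupV ?(subsetP nPG).
Qed.

Lemma pnat_card_commg_class w : w \in P -> p.-nat #|S w|.
Proof.
move=> Pw; change (p.-group (Group (groupS (subsetP sPA w Pw)))).
by apply: pgroupS (pcore_pgroup p A); apply: commg_class_sub_pcore.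
Qed.

Lemma p'_constt_cent_pcore w : w \in P -> g.`_p^' \in 'C[w].
Proof.
move=> Pw; set u := g.`_p^'; set k := #|S w|.
have cop_uk : coprime #[u] k.
  by rewrite (pnat_coprime (p_elt_constt _ g)) // pnatNK pnat_card_commg_class.
have /cycleP[i def_u] : u \in <[g]> := cycle_constt p^' g.
have uk_cw : u ^+ k \in 'C[w].
  rewrite def_u -expgM mulnC expgM groupX //.
  by rewrite expg_card_commg_class_cent ?(subsetP sPA).
suff: <[u]> \subset 'C[w] by rewrite cycle_subG.
have /eqP-> : generator <[u]> (u ^+ k) by rewrite generator_coprime.
by rewrite cycle_subG.
Qed.

(* The p-part of g fixes a nontrivial point of the p-group S w (orbit count
   mod p), and the p'-part of g centralizes every p-element of A. *)
Lemma commg_class_cent_gen w : w \in P -> 1 < #|S w| ->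
  exists2 s, s \in S w :\ 1 & tau s = 1.
Proof.
move=> Pw S_gt1; have Aw := subsetP sPA w Pw; set gp := g.`_p.
have pgp : p.-group <[gp]> by rewrite /pgroup -orderE; apply: p_elt_constt.
have Ggp : gp \in G by rewrite (subsetP _ _ (cycle_constt p g)) ?cycle_subG.
have actsJ : [acts <[gp]>, on S w | 'J].
  by rewrite astabsJ cycle_subG (subsetP (norm_commg_class Aw)).
set F := 'Fix_(S w | 'J)(<[gp]>).
have p_dvd_F : p %| #|F|.
  have [k def_k] := p_natP (pnat_card_commg_class Pw).
  have k_gt0 : 0 < k by case: k def_k S_gt1 => // ->.
  rewrite /dvdn -(pgroup_fix_mod pgp actsJ) def_k.
  by rewrite -/(dvdn p (p ^ k)) dvdn_exp.
have F1 : 1 \in F.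
  apply/setIP; split; last by rewrite afixJ group1.
  by rewrite -(comm1g w); apply: imset_f.
have /subsetPn[s /setIP[Ss] + s_neq1] : ~~ (F \subset [set 1]).
  apply/negP=> /subset_leq_card; rewrite cards1; apply/negP; rewrite -ltnNge.
  apply: leq_trans (prime_gt1 p_pr) (dvdn_leq _ p_dvd_F).
  by apply/card_gt0P; exists 1.
rewrite afixJ cent_cycle => cs_gp.
exists s; first by rewrite !inE -in_set1 s_neq1.
have Ps : s \in P := subsetP (commg_class_sub_pcore Pw) s Ss.
have cs_g : g \in 'C[s].
  by rewrite -(consttC p g) groupM ?p'_constt_cent_pcore // cent1C.
by apply/eqP/commgP/cent1P; rewrite cent1C.
Qed.

Lemma card_commg_class_commg_gen_lt w :
  w \in P -> 1 < #|S w| -> #|S (tau w)| < #|S w|.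
Proof.
move=> Pw S_gt1; have Aw := subsetP sPA w Pw.
have [s /setD1P[s_neq1 Ss] taus1] := commg_class_cent_gen Pw S_gt1.
apply: leq_ltn_trans (subset_leq_card (commg_class_commg_gen_sub Aw)) _.
rewrite ltn_neqAle leq_imset_card andbT.
apply: contra s_neq1 => /imset_injP inj_tau.
have S1 : 1 \in S w by rewrite -(comm1g w); apply: imset_f.
by apply/eqP/inj_tau; rewrite // taus1 /tau comm1g.
Qed.

Lemma iter_commg_gen_pcore j w :
  w \in P -> #|S w| <= p ^ j -> iter j.+1 tau w = 1.
Proof.
elim: j w => [|j IHj] w Pw S_le; first exact: commg_gen_eq1.
rewrite iterSr; apply: IHj; first exact: commg_gen_pcore.
have [S_gt1 | S_le1] := ltnP 1 #|S w|.
  apply: pnat_leq_pexp => //; first exact/pnat_card_commg_class/commg_gen_pcore.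
  exact: leq_trans (card_commg_class_commg_gen_lt Pw S_gt1) S_le.
apply: leq_trans (card_commg_class_commg_gen_le (subsetP sPA w Pw)) _.
by apply: leq_trans S_le1 _; rewrite expn_gt0 prime_gt0.
Qed.

Lemma iter_commg_gen_pcore_logn m w :
  logn p #|G : A| <= m -> w \in P -> iter m.+1 tau w = 1.
Proof.
move=> le_m Pw; have Aw := subsetP sPA w Pw; set l := logn p #|G : A|.
have -> : m.+1 = (m - l) + l.+1 by rewrite addnS subnK.
rewrite iterD iter_commg_gen_pcore //; first exact: (morph1 (tau_ _)).
rewrite -p_part -(part_pnat_id (pnat_card_commg_class Pw)).
by rewrite dvdn_leq ?part_gt0 // partn_dvd ?indexg_gt0 ?card_commg_class_dvd.
Qed.

End PrimeComponent.

Theorem lcn_commg_gen_trivial m :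
  (forall p, prime p -> logn p #|G : A| <= m) -> 'L_m.+2(G) = 1.
Proof.
move=> le_m; have kerA : A \subset 'ker (tau_ m.+1).
  apply: p_elt_sub_ker => p x p_pr Ax p_x.
  apply: (iter_commg_gen_pcore_logn p_pr (le_m p p_pr)).
  have HallP := nilpotent_pcore_Hall p (abelian_nil cAA).
  by rewrite (mem_normal_Hall HallP) ?pcore_normal.
apply/trivgP; apply: subset_trans (lcn_sub_iter_commg_gen m) _.
by rewrite -(morphim_ker (tau_ m.+1)) morphimS.
Qed.

End CommutatorWithGenerator.

Theorem mainTheorem13 (n : nat) (gT : finGroupType) (G A : {group gT}) :
  1 < n -> odd n ->
  abelian A -> A <| G -> (G / A) \isog (Zp n) ->
  (forall phi : {perm gT}, phi \in Aut G -> group_set (e_class G phi)) ->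
  'L_((\max_(p <- primes n) logn p n).+2)(G) = 1.
Proof.
move=> n_gt1 _ cAA nsAG isoGA e_class_group.
have [sAG nAG] := andP nsAG.
have cycGA : cyclic (G / A).
  rewrite (isog_cyclic isoGA) /= /Zp ifT //.
  by apply/cyclicP; exists Zp1; apply: Zp_cycle.
have [g Gg defG] := cyclic_quotient_mulg_cycle nsAG cycGA.
apply: (lcn_commg_gen_trivial cAA (subsetP nAG g Gg) defG) => [w Aw | p _].
  have Gw := subsetP sAG w Aw.
  rewrite -e_class_conj_aut //; apply: e_class_group.
  by rewrite (subsetP (Aut_conj_aut G G)) ?mem_morphim ?(subsetP (normG G)).
have -> : #|G : A| = n.
  by rewrite -card_quotient // (card_isog isoGA) card_Zp //; apply: ltnW.
have [p_n | p_n] := boolP (p \in primes n); first exact: leq_bigmax_seq.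
by move: p_n; rewrite -logn_gt0 -leqNgt leqn0 => /eqP->.
Qed.
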